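(* Let $A$ be a nicely essential subring of a ring $S$. Then: (1) If $A$ is prime (respectively, semiprime), then so is $S$; if $A$ is prime (resp. semiprime) and left Goldie, then $S$ is prime (resp. semiprime) and left Goldie. (2) If $S$ is left Goldie, then so is $A$. (3) If $S$ is prime (respectively, semiprime) and left Goldie, then every strongly nicely essential subring of $S$ is prime (respectively, semiprime) and left Goldie.
   Context: A subring $A$ of a ring $S$ (same identity) is a nicely essential subring if for every finite set $E\subseteq S$ of non-zero elements there exists $a\in A$ with $0\neq ax\in A$ for all $x\in E$. It is a strongly nicely essential subring if moreover for every $x\in S$ there exists a left regular element $c$ of $A$ (i.e. $c\in A$ with $\{a\in A: ac=0\}=0$) such that $cx\in A$. A ring is left Goldie if it has finite left uniform dimension and satisfies the ascending chain condition on left annihilators. *)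

From HB Require Import structures.
From mathcomp Require Import all_boot all_order all_algebra.
Set Implicit Arguments. Unset Strict Implicit. Unset Printing Implicit Defensive.
Import GRing.Theory.
Local Open Scope ring_scope.

Section RingNotions.
Variable R : nzRingType.

Definition prime_ring : Prop :=
  forall a b : R, (forall r : R, a * r * b = 0) -> a = 0 \/ b = 0.

Definition semiprime_ring : Prop :=
  forall a : R, (forall r : R, a * r * a = 0) -> a = 0.

Definition left_ideal (I : R -> Prop) : Prop :=
  [/\ I 0, (forall x y, I x -> I y -> I (x + y)) & (forall r x, I x -> I (r * x))].

Definition nonzero_set (I : R -> Prop) : Prop := exists x, I x /\ x <> 0.

Definition independent_family (I : nat -> R -> Prop) : Prop :=
  forall (n : nat) (x : nat -> R),
    (forall i, (i < n)%N -> I i (x i)) ->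
    \sum_(i < n) x i = 0 -> forall i, (i < n)%N -> x i = 0.

Definition finite_left_udim : Prop :=
  ~ exists I : nat -> R -> Prop,
      (forall n, left_ideal (I n)) /\ (forall n, nonzero_set (I n)) /\
      independent_family I.

Definition lann (X : R -> Prop) : R -> Prop :=
  fun r => forall x, X x -> r * x = 0.

Definition acc_left_annihilators : Prop :=
  forall X : nat -> R -> Prop,
    (forall n r, lann (X n) r -> lann (X n.+1) r) ->
    exists N, forall m, (N <= m)%N -> forall r, lann (X m) r <-> lann (X N) r.

Definition left_goldie : Prop := finite_left_udim /\ acc_left_annihilators.

End RingNotions.

(* A subring A of S (same identity) is given by an injective unital ring
   morphism f : A -> S, identifying A with its image. *)
Definition nicely_essential (A S : nzRingType) (f : {rmorphism A -> S}) : Prop :=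
  injective f /\
  forall E : seq S, (forall x, x \in E -> x != 0) ->
    exists a : A, forall x, x \in E -> f a * x != 0 /\ exists b : A, f a * x = f b.

Definition left_regular (A : nzRingType) (c : A) : Prop :=
  forall a : A, a * c = 0 -> a = 0.

Definition strongly_nicely_essential (A S : nzRingType) (f : {rmorphism A -> S}) : Prop :=
  nicely_essential f /\
  forall x : S, exists c : A, left_regular c /\ exists b : A, f c * x = f b.

(* Nicely essential embeddings let one multiply finitely many elements of S
   into A without killing them.  This transports primeness, semiprimeness,
   infinite direct sums of left ideals and nonsingularity (Z = 0) from A to S,
   and left annihilators and direct sums from S back to A.  The Goldie property
   of S follows because a semiprime ring with ACC on left annihilators is
   nonsingular, and a nonsingular ring of finite uniform dimension has ACC on
   left annihilators.  For a strongly nicely essential B, aBb = 0 lifts to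
   g(a) S g(b) = 0 by clearing the left-regular "denominator" c of each s in S:
   in a ring of finite uniform dimension right multiplication by a regular
   element has essential image, so g(c) can be cancelled. *)

From Stdlib Require Import Classical IndefiniteDescription.
From mathcomp Require Import all_boot all_order all_algebra.
Set Implicit Arguments. Unset Strict Implicit. Unset Printing Implicit Defensive.
Import GRing.Theory.
Local Open Scope ring_scope.

Section Nonsingular.
Variable R : nzRingType.

Definition essential (L : R -> Prop) : Prop :=
  forall y : R, y <> 0 -> exists r, r * y <> 0 /\ L (r * y).

(* The left singular ideal Z(R) vanishes. *)
Definition left_nonsingular : Prop :=
  forall t : R, essential (fun r => r * t = 0) -> t = 0.

Lemma prime_semiprime : prime_ring R -> semiprime_ring R.
Proof. by move=> hp a /hp []. Qed.

Lemma essentialW (L L' : R -> Prop) :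
  (forall x, L x -> L' x) -> essential L -> essential L'.
Proof. by move=> LL' eL y /eL [r [ry Lry]]; exists r; split=> //; apply: LL'. Qed.

Lemma lann_pred1 (c r : R) : lann (fun x => x = c) r <-> r * c = 0.
Proof. by split=> [h|h x ->]; [apply: h|]. Qed.

Lemma lann_left_ideal (X : R -> Prop) : left_ideal (lann X).
Proof.
split=> [x _|a b ha hb x Xx|r a ha x Xx]; first by rewrite mul0r.
  by rewrite mulrDl ha // hb // addr0.
by rewrite -mulrA ha // mulr0.
Qed.

Lemma left_ideal_sum (L : R -> Prop) n (x : nat -> R) :
  left_ideal L -> (forall i, (i < n)%N -> L (x i)) -> L (\sum_(i < n) x i).
Proof. by move=> [L0 LD _] Lx; elim/big_ind: _ => // i _; apply: Lx. Qed.

Lemma left_idealN (L : R -> Prop) x : left_ideal L -> L x -> L (- x).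
Proof. by move=> [_ _ LM] Lx; rewrite -mulN1r; apply: LM. Qed.

Lemma acc_lann_seq (c : nat -> R) : acc_left_annihilators R ->
  (forall n r, r * c n = 0 -> r * c n.+1 = 0) ->
  exists N, forall r, r * c N.+1 = 0 -> r * c N = 0.
Proof.
move=> hacc mono.
have [|N HN] := hacc (fun n x => x = c n).
  by move=> n r /lann_pred1 /mono /lann_pred1.
by exists N => r /lann_pred1 /(HN _ (leqnSn N)) /lann_pred1.
Qed.

Lemma acc_lann_maximal (P : R -> Prop) b : acc_left_annihilators R -> P b ->
  exists c, P c /\ forall c', P c' -> (forall r, r * c = 0 -> r * c' = 0) ->
    forall r, r * c' = 0 -> r * c = 0.
Proof.
move=> hacc Pb; apply: NNPP => nomax.
have grow (c : {x | P x}) : exists c' : {x | P x},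
    (forall r, r * sval c = 0 -> r * sval c' = 0) /\
    ~ (forall r, r * sval c' = 0 -> r * sval c = 0).
  case: c => c Pc; apply: NNPP => nogrow; apply: nomax; exists c.
  split=> // c' Pc' sub; apply: NNPP => nsub; apply: nogrow.
  by exists (exist _ c' Pc').
have [next hnext] := functional_choice _ grow.
pose chain n := iter n next (exist _ b Pb).
have [N HN] := acc_lann_seq hacc (fun n => (hnext (chain n)).1).
by have [_ []] := hnext (chain N).
Qed.

Lemma nilpotent_of_essential_lann (x : R) : acc_left_annihilators R ->
  essential (fun r => r * x = 0) -> exists N, x ^+ N = 0.
Proof.
move=> hacc ex.
have mono n r : r * x ^+ n = 0 -> r * x ^+ n.+1 = 0.
  by rewrite exprSr mulrA => ->; rewrite mul0r.
have [N HN] := acc_lann_seq hacc mono.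
exists N; apply: NNPP => xN; have [t [txN txN1]] := ex _ xN.
by apply/txN/HN; rewrite exprSr mulrA.
Qed.

(* Take c with essential annihilator and maximal left annihilator; for every r,
   x = c r is nilpotent, and maximality forbids x^j c <> 0 = x^(j+1) c unless
   x c = 0, so cRc = 0. *)
Lemma semiprime_acc_nonsingular :
  semiprime_ring R -> acc_left_annihilators R -> left_nonsingular.
Proof.
move=> hsp hacc b eb; apply: NNPP => b0.
pose P c := c <> 0 /\ essential (fun r => r * c = 0).
have [c [[c0 ec] cmax]] := acc_lann_maximal hacc (conj b0 eb : P b).
apply: (c0); apply: hsp => r; pose x := c * r.
have [N xN] : exists N, x ^+ N = 0.
  apply: nilpotent_of_essential_lann hacc _; apply: essentialW ec => t tc.
  by rewrite /x mulrA tc mul0r.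
have lann_xc j t : t * c = 0 -> t * (x ^+ j * c) = 0.
  case: j => [|j] tc; first by rewrite expr0 mul1r.
  by rewrite exprS /x -!mulrA !mulrA tc !mul0r.
apply: NNPP => xc; suff xjc j : x ^+ j * c <> 0 by apply: (xjc N); rewrite xN mul0r.
elim: j => [|j IH]; first by rewrite expr0 mul1r.
have Pxjc : P (x ^+ j * c) by split; [|apply: essentialW ec; apply: lann_xc].
move=> xj1c; apply/xc/(cmax _ Pxjc (lann_xc j)).
by rewrite mulrA -exprS.
Qed.

End Nonsingular.

Section UniformDimension.
Variable R : nzRingType.

Definition cyclic_family (u : nat -> R) (i : nat) (y : R) : Prop :=
  exists r, y = r * u i.

Lemma cyclic_family_left_ideal u i : left_ideal (cyclic_family u i).
Proof.
split=> [|_ _ [a ->] [b ->]|s _ [a ->]]; first by exists 0; rewrite mul0r.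
  by exists (a + b); rewrite mulrDl.
by exists (s * a); rewrite mulrA.
Qed.

Lemma cyclic_family_independent (u : nat -> R) :
  (forall n r (s : nat -> R), r * u n = \sum_(i < n) s i * u i -> r * u n = 0) ->
  independent_family (cyclic_family u).
Proof.
move=> triangular.
have indep m (r : nat -> R) :
    \sum_(i < m) r i * u i = 0 -> forall i, (i < m)%N -> r i * u i = 0.
  elim: m => [//|m IH]; rewrite big_ord_recr /= => sum0.
  have rm0 : r m * u m = 0.
    apply: (triangular m (r m) (fun i => - r i)).
    under eq_bigr do rewrite mulNr.
    by apply/eqP; rewrite sumrN -addr_eq0 addrC sum0.
  move: sum0; rewrite rm0 addr0 => /IH {}IH i.
  by rewrite ltnS leq_eqVlt => /predU1P [->|/IH].
move=> n x hx.
have [r hr] : exists r : nat -> R, forall i, (i < n)%N -> x i = r i * u i.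
  apply: (functional_choice (fun i ri => (i < n)%N -> x i = ri * u i)) => i.
  by case: (ltnP i n) => [/hx [ri ->]|]; [exists ri|exists 0].
rewrite (eq_bigr (fun i : 'I_n => r i * u i)) => [/indep {}indep i ilt|i _].
  by rewrite hr // indep.
exact: hr.
Qed.

Lemma finite_udim_triangular (u : nat -> R) :
  finite_left_udim R -> (forall i, u i <> 0) ->
  ~ (forall n r (s : nat -> R), r * u n = \sum_(i < n) s i * u i -> r * u n = 0).
Proof.
move=> hud u0 /cyclic_family_independent indep; apply: hud.
exists (cyclic_family u); split; first exact: cyclic_family_left_ideal.
by split=> // i; exists (u i); split; [exists 1; rewrite mul1r|].
Qed.

(* In a nonsingular ring an annihilator left ideal is complement-closed. *)
Lemma nonsingular_lann_complement (X M : R -> Prop) z :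
  left_nonsingular R -> left_ideal M -> M z -> ~ lann X z ->
  exists u, [/\ M u, u <> 0 & forall r, lann X (r * u) -> r * u = 0].
Proof.
move=> hns [_ _ MM] Mz nXz; apply: NNPP => nocompl.
have [y [Xy zy]] : exists y, X y /\ z * y <> 0.
  apply: NNPP => h; apply: nXz => y Xy; apply: NNPP => zy; apply: h; by exists y.
apply/zy/hns => w w0; case: (classic (w * z = 0)) => wz.
  by exists 1; rewrite mul1r mulrA wz mul0r.
have [r [Lrwz rwz]] : exists r, lann X (r * (w * z)) /\ r * (w * z) <> 0.
  apply: NNPP => h; apply: nocompl; exists (w * z); split; [exact: MM|done|].
  by move=> r Lr; apply: NNPP => rwz; apply: h; exists r.
exists r; split; first by move=> rw; apply: rwz; rewrite mulrA rw mul0r.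
by rewrite mulrA -(mulrA r); apply: Lrwz.
Qed.

(* A strictly increasing chain of annihilators yields, at each step, a nonzero
   element of the new annihilator whose cyclic left ideal meets the previous
   annihilator trivially; these cyclic ideals form an infinite direct sum. *)
Lemma udim_nonsingular_acc :
  finite_left_udim R -> left_nonsingular R -> acc_left_annihilators R.
Proof.
move=> hud hns X mono; pose L n := lann (X n).
have monoL : {homo L : n m / (n <= m)%N >-> forall r, n r -> m r}.
  by apply: homo_leq => [A r //|B A C AB BC r /AB /BC //|]; exact: mono.
apply: NNPP => nostab.
have fresh N : exists p : nat * R,
    [/\ (N <= p.1)%N, L p.1 p.2, p.2 <> 0 & forall r, L N (r * p.2) -> r * p.2 = 0].
  have [m [Nm [z [Lz nLz]]]] : exists m, (N <= m)%N /\ exists z, L m z /\ ~ L N z.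
    apply: NNPP => h; apply: nostab; exists N => m Nm r.
    split; last exact: (monoL N m Nm).
    by move=> Lmr; apply: NNPP => nLNr; apply: h; exists m; split=> //; exists r.
  have [u [Lu u0 compl]] := nonsingular_lann_complement hns (lann_left_ideal _) Lz nLz.
  by exists (m, u).
have [next hnext] := functional_choice _ fresh.
pose idx i := iter i (fun N => (next N).1) 0%N.
have idx_mono : {homo idx : i j / (i <= j)%N}.
  by apply: homo_leq => [//|j i k|i]; [apply: leq_trans|case: (hnext (idx i))].
pose u i := (next (idx i)).2.
apply: (finite_udim_triangular hud (u := u)) => [i|n r s e].
  by case: (hnext (idx i)).
have [_ _ _ compl] := hnext (idx n); apply: compl; rewrite e.
apply: (left_ideal_sum (x := fun i => s i * u i)) => [|i ilt].
  exact: lann_left_ideal.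
have [_ _ LM] := lann_left_ideal (X (idx n)); apply: LM.
by apply: (monoL (idx i.+1)); [apply: idx_mono|case: (hnext (idx i))].
Qed.

(* If the right translate H u misses some nonzero R x inside H, then
   R x, R x u, R x u^2, ... is an infinite direct sum. *)
Lemma udim_right_translate_essential (H : R -> Prop) (u : R) :
  finite_left_udim R -> left_ideal H -> (forall x, H x -> H (x * u)) ->
  (forall x, x * u = 0 -> x = 0) ->
  forall x, H x -> x <> 0 -> exists r, r * x <> 0 /\ exists h, H h /\ r * x = h * u.
Proof.
move=> hud HI Hu lu x Hx x0; apply: NNPP => nr; have [_ HD HM] := HI.
have Rx_Hu r h : H h -> r * x = h * u -> r * x = 0.
  move=> Hh e; apply: NNPP => rx; apply: nr; exists r; split=> //; by exists h.
have Hxu i : H (x * u ^+ i).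
  by elim: i => [|i IH]; rewrite ?expr0 ?mulr1 // exprSr mulrA; apply: Hu.
apply: (finite_udim_triangular hud (u := fun i => x * u ^+ i)) => [i|n].
  by elim: i => [|i IH]; rewrite ?expr0 ?mulr1 // exprSr mulrA => /lu.
elim: n => [r s|n IH r s]; first by rewrite big_ord0.
pose T := \sum_(i < n) s i.+1 * (x * u ^+ i).
have HT : H T.
  by apply: (left_ideal_sum (x := fun i => s i.+1 * (x * u ^+ i))) => // i _; apply: HM.
have ru : r * (x * u ^+ n.+1) = r * (x * u ^+ n) * u by rewrite exprSr !mulrA.
rewrite big_ord_recl expr0 mulr1 ru.
have -> : \sum_(i < n) s (bump 0 i) * (x * u ^+ bump 0 i) = T * u.
  by rewrite mulr_suml; apply: eq_bigr => i _; rewrite exprSr !mulrA.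
move=> e; have sx0 : s 0%N * x = 0.
  apply: (Rx_Hu _ (r * (x * u ^+ n) - T)); last by rewrite mulrBl e addrK.
  by apply: HD; [apply: HM|apply: left_idealN].
move: e; rewrite sx0 add0r => /eqP; rewrite -subr_eq0 -mulrBl => /eqP /lu /eqP.
by rewrite subr_eq0 => /eqP /(IH r (fun i => s i.+1)) ->; rewrite mul0r.
Qed.

Lemma nonsingular_cancel_right (H : R -> Prop) (u z : R) :
  finite_left_udim R -> left_nonsingular R -> left_ideal H ->
  (forall x, H x -> H (x * u)) -> (forall x, x * u = 0 -> x = 0) ->
  (forall x, H x -> x * u * z = 0) -> forall x, H x -> x * z = 0.
Proof.
move=> hud hns HI Hu lu Huz x Hx; apply: hns => w w0.
case: (classic (w * x = 0)) => wx; first by exists 1; rewrite mul1r mulrA wx mul0r.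
have [_ _ HM] := HI.
have [r [rwx [h [Hh e]]]] := udim_right_translate_essential hud HI Hu lu (HM w x Hx) wx.
exists r; split; first by move=> rw; apply: rwx; rewrite mulrA rw mul0r.
by rewrite mulrA -(mulrA r) e Huz.
Qed.

End UniformDimension.

Section Overring.
Variables (A S : nzRingType) (f : {rmorphism A -> S}).
Hypothesis hne : nicely_essential f.

Lemma f_eq0 x : f x = 0 -> x = 0.
Proof. by case: hne => finj _ fx0; apply: finj; rewrite fx0 rmorph0. Qed.

Lemma nicely_essential_seq (E : seq S) : exists a, forall x, x \in E ->
  (x != 0 -> f a * x != 0) /\ exists b, f a * x = f b.
Proof.
case: hne => _ /(_ [seq x <- E | x != 0]) [x|a ha].
  by rewrite mem_filter => /andP [].
exists a => x xE; case: (eqVneq x 0) => [->|x0].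
  by split=> //; exists 0; rewrite mulr0 rmorph0.
have [|ax0 axA] := ha x; [by rewrite mem_filter x0|by split].
Qed.

Lemma nicely_essential1 x : x <> 0 -> exists a, f a * x <> 0 /\ exists b, f a * x = f b.
Proof.
move=> /eqP x0; have [a /(_ x (mem_head _ _))] := nicely_essential_seq [:: x].
by case=> /(_ x0) /eqP ax0 axA; exists a.
Qed.

Lemma nicely_essential2 x y :
  y <> 0 -> exists a, (exists b, f a * x = f b) /\ f a * y <> 0.
Proof.
move=> /eqP y0; have [a ha] := nicely_essential_seq [:: x; y].
exists a; split; first by case: (ha x (mem_head _ _)).
by apply/eqP; apply: (ha y _).1; rewrite ?inE ?eqxx ?orbT.
Qed.

Lemma prime_overring : prime_ring A -> prime_ring S.
Proof.
move=> hp a b hab; apply: NNPP => /not_or_and [a0 b0].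
have [c [cb0 [b' eb]]] := nicely_essential1 b0.
have [d [da0 [a' ea]]] := nicely_essential1 a0.
have [a'0|b'0] : a' = 0 \/ b' = 0.
- apply: hp => r; apply: f_eq0; rewrite !rmorphM -ea -eb.
  have -> : f d * a * f r * (f c * b) = f d * (a * (f r * f c) * b) by rewrite !mulrA.
  by rewrite hab mulr0.
- by apply: da0; rewrite ea a'0 rmorph0.
- by apply: cb0; rewrite eb b'0 rmorph0.
Qed.

Lemma semiprime_overring : semiprime_ring A -> semiprime_ring S.
Proof.
move=> hp a haa; apply: NNPP => a0.
have [d [da0 [a' ea]]] := nicely_essential1 a0.
apply: da0; rewrite ea; suff -> : a' = 0 by rewrite rmorph0.
apply: hp => r; apply: f_eq0; rewrite !rmorphM -ea.
have -> : f d * a * f r * (f d * a) = f d * (a * (f r * f d) * a) by rewrite !mulrA.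
by rewrite haa mulr0.
Qed.

Lemma udim_overring : finite_left_udim A -> finite_left_udim S.
Proof.
move=> hud [I [II [Inz Iind]]]; apply: hud.
exists (fun n x => I n (f x)); split; [|split].
- move=> n; have [I0 ID IM] := II n.
  by split=> [|x y|r x]; rewrite ?rmorph0 ?rmorphD ?rmorphM //; [apply: ID|apply: IM].
- move=> n; have [x [Ix x0]] := Inz n; have [a [ax0 [b eb]]] := nicely_essential1 x0.
  exists b; split; last by move=> b0; apply: ax0; rewrite eb b0 rmorph0.
  by rewrite -eb; have [_ _ IM] := II n; apply: IM.
- move=> n x hx hs i ilt; apply: f_eq0; apply: (Iind n (fun i => f (x i))) => //.
  by rewrite -rmorph_sum hs rmorph0.
Qed.

Lemma nonsingular_overring : left_nonsingular A -> left_nonsingular S.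
Proof.
move=> hns t et; apply: NNPP => t0.
have [a [at0 [b eb]]] := nicely_essential1 t0.
apply: at0; rewrite eb; suff -> : b = 0 by rewrite rmorph0.
apply: hns => y y0; case: (classic (y * a = 0)) => ya0.
  exists 1; rewrite mul1r; split=> //; apply: f_eq0.
  by rewrite rmorphM -eb mulrA -rmorphM ya0 rmorph0 mul0r.
have [s [sya0 syat]] := et _ (fun fya => ya0 (f_eq0 fya)).
have [a' [[c ec] a'sya0]] := nicely_essential2 s sya0.
exists c; split.
  by move=> cy0; apply: a'sya0; rewrite mulrA ec -rmorphM mulrA cy0 mul0r rmorph0.
apply: f_eq0; rewrite !rmorphM -eb -ec.
have -> : f a' * s * f y * (f a * t) = f a' * (s * (f y * f a) * t) by rewrite !mulrA.
by rewrite -rmorphM syat mulr0.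
Qed.

Lemma goldie_overring : semiprime_ring A -> left_goldie A -> left_goldie S.
Proof.
move=> hsp [hud hacc]; have hudS := udim_overring hud.
split=> //; apply: udim_nonsingular_acc hudS _.
by apply: nonsingular_overring; apply: semiprime_acc_nonsingular.
Qed.

Lemma left_regular_overring c : left_regular c -> forall x : S, x * f c = 0 -> x = 0.
Proof.
move=> creg x xc0; apply: NNPP => x0.
have [a [ax0 [b eb]]] := nicely_essential1 x0.
apply: ax0; rewrite eb; suff -> : b = 0 by rewrite rmorph0.
by apply/creg/f_eq0; rewrite rmorphM -eb -mulrA xc0 mulr0.
Qed.

End Overring.

Section Subring.
Variables (A S : nzRingType) (f : {rmorphism A -> S}).
Hypothesis hne : nicely_essential f.

Lemma acc_lann_subring : acc_left_annihilators S -> acc_left_annihilators A.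
Proof.
move=> hacc X mono; pose Y n s := exists x, X n x /\ s = f x.
have lannY n r : lann (Y n) (f r) <-> lann (X n) r.
  split=> [h x Xx|h _ [x [Xx ->]]]; last by rewrite -rmorphM h // rmorph0.
  by apply: (f_eq0 hne); rewrite rmorphM; apply: h; exists x.
have monoY n r : lann (Y n) r -> lann (Y n.+1) r.
  move=> h _ [x [Xx ->]]; apply: NNPP => rx0.
  have [a [[c ec] arx0]] := nicely_essential2 hne r rx0.
  have Xc : lann (X n) c.
    by apply/lannY => _ [y [Xy ->]]; rewrite -ec -mulrA h ?mulr0 //; exists y.
  by apply: arx0; rewrite mulrA ec -rmorphM (mono n c Xc x Xx) rmorph0.
have [N HN] := hacc Y monoY.
by exists N => m Nm r; rewrite -!lannY; apply: HN.
Qed.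

Definition lift_ideal (J : A -> Prop) (x : S) : Prop :=
  exists l : seq (S * A), (forall p, p \in l -> J p.2) /\ x = \sum_(p <- l) p.1 * f p.2.

Lemma lift_ideal_left_ideal J : left_ideal (lift_ideal J).
Proof.
split.
- by exists [::]; rewrite big_nil.
- move=> _ _ [l1 [h1 ->]] [l2 [h2 ->]]; exists (l1 ++ l2); rewrite big_cat.
  by split=> // p; rewrite mem_cat => /orP [/h1|/h2].
- move=> r _ [l [h ->]]; exists [seq (r * p.1, p.2) | p <- l]; split.
    by move=> q /mapP [p pl ->] /=; apply: h.
  by rewrite big_map mulr_sumr; apply: eq_bigr => p _; rewrite mulrA.
Qed.

Lemma lift_ideal_pull J a l : left_ideal J -> (forall p, p \in l -> J p.2) ->
  (forall p, p \in l -> exists c, f a * p.1 = f c) ->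
  exists b, J b /\ f b = f a * \sum_(p <- l) p.1 * f p.2.
Proof.
move=> [J0 JD JM]; elim: l => [|p l IH] lJ la.
  by exists 0; rewrite big_nil mulr0 rmorph0.
have [b [Jb eb]] : exists b, J b /\ f b = f a * \sum_(p <- l) p.1 * f p.2.
  by apply: IH => q ql; [apply: lJ|apply: la]; rewrite inE ql orbT.
have [c ec] := la p (mem_head _ _).
exists (c * p.2 + b); split; first by apply: JD => //; apply/JM/lJ/mem_head.
by rewrite big_cons rmorphD rmorphM eb -ec mulrDr !mulrA.
Qed.

Lemma lift_ideal_pull_family (J : nat -> A -> Prop) n (x : nat -> S) :
  (forall i, left_ideal (J i)) -> (forall i, (i < n)%N -> lift_ideal (J i) (x i)) ->
  exists a (b : nat -> A), forall i, (i < n)%N ->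
    [/\ J i (b i), f (b i) = f a * x i & x i <> 0 -> f a * x i <> 0].
Proof.
move=> JI hx.
have [l hl] : exists l : nat -> seq (S * A), forall i, (i < n)%N ->
    (forall p, p \in l i -> J i p.2) /\ x i = \sum_(p <- l i) p.1 * f p.2.
  apply: (functional_choice (fun i li => (i < n)%N ->
    (forall p, p \in li -> J i p.2) /\ x i = \sum_(p <- li) p.1 * f p.2)) => i.
  by case: (ltnP i n) => [/hx [li hli]|]; [exists li|exists [::]].
pose E := [seq p.1 | i <- iota 0 n, p <- l i] ++ [seq x i | i <- iota 0 n].
have [a ha] := nicely_essential_seq hne E.
have [b hb] : exists b : nat -> A,
    forall i, (i < n)%N -> J i (b i) /\ f (b i) = f a * x i.
  apply: (functional_choice (fun i bi => (i < n)%N -> J i bi /\ f bi = f a * x i)).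
  move=> i.
  case: (ltnP i n) => [ilt|]; last by exists 0.
  have [lJ ->] := hl i ilt; have [|c [Jc ec]] := lift_ideal_pull (a := a) (JI i) lJ.
    move=> p pl; apply: (ha p.1 _).2; rewrite mem_cat; apply/orP; left.
    apply/flattenP; exists [seq q.1 | q <- l i]; last exact: map_f.
    by apply/mapP; exists i; rewrite ?mem_iota.
  by exists c.
exists a, b => i ilt; have [Jb eb] := hb i ilt; split=> // /eqP xi0.
by apply/eqP; apply: (ha (x i) _).1 => //; rewrite mem_cat map_f ?orbT // mem_iota.
Qed.

Lemma udim_subring : finite_left_udim S -> finite_left_udim A.
Proof.
move=> hud [J [JI [Jnz Jind]]]; apply: hud.
exists (fun n => lift_ideal (J n)); split; [|split].
- by move=> n; apply: lift_ideal_left_ideal.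
- move=> n; have [x [Jx x0]] := Jnz n; exists (f x); split; last by move/(f_eq0 hne).
  by exists [:: (1, x)]; rewrite big_seq1 mul1r; split=> // p; rewrite inE => /eqP ->.
- move=> n x hx sum0 i ilt; have [a [b hb]] := lift_ideal_pull_family JI hx.
  have b0 : b i = 0.
    apply: (Jind n b) => // [j jlt|]; first by case: (hb j jlt).
    apply: (f_eq0 hne); rewrite rmorph_sum.
    rewrite (eq_bigr (fun j : 'I_n => f a * x j)) => [|j _].
      by rewrite -mulr_sumr sum0 mulr0.
    by case: (hb j (ltn_ord j)).
  have [_ eb axi0] := hb i ilt; apply: NNPP => /axi0; apply.
  by rewrite -eb b0 rmorph0.
Qed.

Lemma goldie_subring : left_goldie S -> left_goldie A.
Proof. by case=> hud hacc; split; [apply: udim_subring|apply: acc_lann_subring]. Qed.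

End Subring.

Section StrongSubring.
Variables (B S : nzRingType) (g : {rmorphism B -> S}).
Hypothesis hsn : strongly_nicely_essential g.

Let hne : nicely_essential g := proj1 hsn.

(* Write c s = d with c left regular in B; the left ideal H of x with
   x g(B) g(b) = 0 satisfies H g(c) (s g(b)) = 0, and g(c) cancels. *)
Lemma strong_subring_annihilator (a b : B) :
  finite_left_udim S -> left_nonsingular S ->
  (forall y, a * y * b = 0) -> forall s, g a * s * g b = 0.
Proof.
move=> hud hns hab s; have [c [creg [d ed]]] := proj2 hsn s.
pose H x := forall y, x * g y * g b = 0.
have HI : left_ideal H.
  split=> [y|x z hx hz y|r x hx y]; first by rewrite !mul0r.
    by rewrite !mulrDl hx hz addr0.
  by rewrite -!mulrA (mulrA x) hx mulr0.
rewrite -mulrA; apply: (nonsingular_cancel_right (u := g c)) hud hns HI _ _ _ _ _.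
- by move=> x hx y; rewrite -(mulrA x) -rmorphM.
- exact: left_regular_overring.
- by move=> x hx; rewrite mulrA -(mulrA x) ed.
- by move=> y; rewrite -!rmorphM hab rmorph0.
Qed.

Lemma prime_strong_subring : prime_ring S -> left_goldie S -> prime_ring B.
Proof.
move=> hp [hud hacc] a b hab.
have hns := semiprime_acc_nonsingular (prime_semiprime hp) hacc.
by case: (hp _ _ (strong_subring_annihilator hud hns hab)) => /(f_eq0 hne); [left|right].
Qed.

Lemma semiprime_strong_subring : semiprime_ring S -> left_goldie S -> semiprime_ring B.
Proof.
move=> hsp [hud hacc] a haa.
have hns := semiprime_acc_nonsingular hsp hacc.
exact/(f_eq0 hne)/hsp/(strong_subring_annihilator hud hns haa).
Qed.

Lemma goldie_strong_subring : left_goldie S -> left_goldie B.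
Proof. exact: goldie_subring hne. Qed.

End StrongSubring.

Theorem mainTheorem4 (A S : nzRingType) (f : {rmorphism A -> S}) :
  nicely_essential f ->
  (* (1) *)
  ((prime_ring A -> prime_ring S) /\
   (semiprime_ring A -> semiprime_ring S) /\
   (prime_ring A /\ left_goldie A -> prime_ring S /\ left_goldie S) /\
   (semiprime_ring A /\ left_goldie A -> semiprime_ring S /\ left_goldie S)) /\
  (* (2) *)
  (left_goldie S -> left_goldie A) /\
  (* (3) *)
  ((prime_ring S /\ left_goldie S ->
      forall (B : nzRingType) (g : {rmorphism B -> S}),
        strongly_nicely_essential g -> prime_ring B /\ left_goldie B) /\
   (semiprime_ring S /\ left_goldie S ->
      forall (B : nzRingType) (g : {rmorphism B -> S}),
        strongly_nicely_essential g -> semiprime_ring B /\ left_goldie B)).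
Proof.
move=> hne; split; [split; [|split; [|split]] | split; [|split]].
- exact: prime_overring hne.
- exact: semiprime_overring hne.
- move=> [hp hg]; split; first exact: prime_overring hne hp.
  exact: goldie_overring hne (prime_semiprime hp) hg.
- move=> [hsp hg]; split; first exact: semiprime_overring hne hsp.
  exact: goldie_overring hne hsp hg.
- exact: goldie_subring hne.
- move=> [hp hg] B g hsn; split; first exact: prime_strong_subring hsn hp hg.
  exact: goldie_strong_subring hsn hg.
- move=> [hsp hg] B g hsn; split; first exact: semiprime_strong_subring hsn hsp hg.
  exact: goldie_strong_subring hsn hg.
Qed.
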